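(* Let $(X,x_0)$ be a $3$-dimensional terminal singular point over $\mathbb{C}$ which is a nonhypersurface singularity, is not a quotient singularity, and has index $\mathrm{ind}_{x_0}X=r>1$. Present $(X,x_0)$ in the normal form of Mori's classification as a hypersurface in $\mathbb{C}^4/\mathbb{Z}_r$ with coordinates $(x,y,z,u)$, and let $\mu:Y\to X$ be the weighted blow up with weights $\mathrm{wt}(x,y,z,u)=(1,1,1,1)$, with exceptional divisor $E$, such that $K_Y=\mu^*K_X+E$. Then \[\mathrm{w}\text{-}\mathrm{mult}_{\mu:x_0}X = 2/r.\]
   Context: Mori's classification: a $3$-fold terminal nonhypersurface singular point is analytically isomorphic to one of: (1) $cA/r$: $\{xy+f(z,u^r)=0\}\subset\mathbb{C}^4/\mathbb{Z}_r(a,r-a,r,1)$, $\gcd(r,a)=1$; (2) $cAx/4$: $\{x^2+y^2+f(z,u^2)=0\}\subset\mathbb{C}^4/\mathbb{Z}_4(1,3,2,1)$; (3) $cAx/2$: $\{x^2+y^2+f(z,u)=0\}$, $f\in(z,u)^4$, in $\mathbb{C}^4/\mathbb{Z}_2(1,2,1,1)$; (4) $cD/2$: $\{u^2+z^3+xyz+f(x,y)=0\}$, or $\{u^2+xyz+z^n+f(x,y)=0\}$ ($n\ge4$), or $\{u^2+y^2z+z^n+f(x,y)=0\}$ ($n\ge3$), $f\in(x,y)^4$, in $\mathbb{C}^4/\mathbb{Z}_2(1,1,2,1)$; (5) $cD/3$: $\{u^2+x^3+y^3+z^3=0\}$, or $\{u^2+x^3+yz^2+f=0\}$, or $\{u^2+x^3+y^3+f=0\}$,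 $f\in(x,y,z)^4$, in $\mathbb{C}^4/\mathbb{Z}_3(1,2,2,3)$; (6) $cE/2$: $\{u^2+x^3+g(y,z)x+h(y,z)=0\}$, $g,h\in(y,z)^4$, in $\mathbb{C}^4/\mathbb{Z}_2(2,1,1,1)$; where the equations define terminal hypersurface singularities and are equivariant. Here $\mathbb{Z}_r(w_1,\dots,w_4)$ means the generator acts by $\zeta^{w_i}$ on the $i$-th coordinate. For the weighted blow up with weights $(1,1,1,1)$, $\mu_*\mathcal{O}_Y(-hE)$ is the ideal of $\mathcal{O}_{X,x_0}$ of restrictions of invariant functions all of whose monomials in $x,y,z,u$ have total degree $\ge h$. Weighted multiplicity: for a subvariety $W\subseteq X$ of dimension $p$ normal at $x_0$ with strict transform $\bar W$, $\mathrm{w}\text{-}\mathrm{mult}_{\mu:x_0}W$ is the number with $\dim\mathcal{O}_{W,x_0}/\mu_*\mathcal{O}_{\bar W}(-hE|_{\bar W})=\mathrm{w}\text{-}\mathrm{mult}_{\mu:x_0}W\cdot h^p/p!+(\text{lower order terms in }h)$. *)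

(* Formal-power-series model of Mori's normal forms of
   3-fold terminal nonhypersurface points and of the weighted multiplicity
   for the (1,1,1,1) weighted blow up, following the paper's description:
     O_{X,x0}   = invariant series / invariant series in the ideal (F),
     mu_* O_Y(-hE) = image of invariant series all of whose monomials have
                     total degree >= h. *)
From HB Require Import structures.
From mathcomp Require Import all_boot all_order all_algebra.
Set Implicit Arguments. Unset Strict Implicit. Unset Printing Implicit Defensive.
Import Order.TTheory GRing.Theory Num.Theory.
Local Open Scope ring_scope.

(* exponent vector (a,b,c,d) of the monomial x^a y^b z^c u^d *)
Definition mono := (nat * nat * nat * nat)%type.
(* weights of the Z_r action on (x,y,z,u) *)
Definition wts := (nat * nat * nat * nat)%type.

Definition tdeg (m : mono) : nat :=
  let: (a, b, c, d) := m in (a + b + c + d)%N.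
Definition wdeg (w : wts) (m : mono) : nat :=
  let: (w1, w2, w3, w4) := w in let: (a, b, c, d) := m in
  (w1 * a + w2 * b + w3 * c + w4 * d)%N.

Section PS.
Variable C : numClosedFieldType.

Definition ps := mono -> C.

Definition mon (a b c d : nat) : ps := fun m => if m == (a, b, c, d) then 1 else 0.

Definition psmul (s t : ps) : ps := fun m =>
  let: (a, b, c, d) := m in
  \sum_(i < a.+1) \sum_(j < b.+1) \sum_(k < c.+1) \sum_(l < d.+1)
     s (i : nat, j : nat, k : nat, l : nat) * t ((a - i)%N, (b - j)%N, (c - k)%N, (d - l)%N).

(* s is invariant under Z_r(w): the generator acts by zeta^{w_i} on the
   i-th coordinate, zeta a primitive r-th root of unity *)
Definition invariant (r : nat) (w : wts) (s : ps) : Prop :=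
  forall m, s m != 0 -> wdeg w m = 0 %[mod r].

Definition semi_invariant (r : nat) (w : wts) (s : ps) : Prop :=
  exists e : nat, forall m, s m != 0 -> wdeg w m = e %[mod r].

Definition ord_ge (s : ps) (h : nat) : Prop := forall m, (tdeg m < h)%N -> s m = 0.

Definition ord2_ge (f : nat -> nat -> C) (k : nat) : Prop :=
  forall i j, (i + j < k)%N -> f i j = 0.
Definition ord3_ge (f : nat -> nat -> nat -> C) (k : nat) : Prop :=
  forall i j l, (i + j + l < k)%N -> f i j l = 0.

(* finite codimension: the quotient V / (W ∩ V) has C-dimension n
   (W is a subspace, V a subspace) *)
Definition lincomb (n : nat) (c : 'I_n -> C) (vs : 'I_n -> ps) : ps :=
  fun m => \sum_(i < n) c i * vs i m.

Definition codim_eq (V W : ps -> Prop) (n : nat) : Prop :=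
  exists vs : 'I_n -> ps,
    [/\ forall i, V (vs i),
        forall v, V v -> exists c : 'I_n -> C,
            W (fun m => v m - lincomb c vs m)
      & forall c : 'I_n -> C, W (lincomb c vs) -> forall i, c i = 0].

Definition Inv (r : nat) (w : wts) : ps -> Prop := invariant r w.

Definition IdX (r : nat) (w : wts) (F : ps) : ps -> Prop :=
  fun s => invariant r w s /\ exists t : ps, forall m, s m = psmul F t m.

(* preimage in Inv of mu_* O_Y(-hE) + the ideal of X *)
Definition blowup_ideal (r : nat) (w : wts) (F : ps) (h : nat) : ps -> Prop :=
  fun s => exists s1 s2, [/\ IdX r w F s1, invariant r w s2, ord_ge s2 h
                           & forall m, s m = s1 m + s2 m].

(* dim O_{X,x0} / mu_* O_Y(-hE) = n *)
Definition colength (r : nat) (w : wts) (F : ps) (h n : nat) : Prop :=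
  codim_eq (Inv r w) (blowup_ideal r w F h) n.

(* w-mult_{mu:x0} X = q for the p-dimensional X:
   dim O/mu_*O_Y(-hE) = q h^p/p! + (terms of lower order in h) *)
Definition wmult_is (r : nat) (w : wts) (F : ps) (p : nat) (q : rat) : Prop :=
  (forall h, exists n, colength r w F h n) /\
  exists K : rat, forall h n, (0 < h)%N -> colength r w F h n ->
    `| n%:R - q * (h%:R ^+ p) / (p`!)%:R | <= K * h%:R ^+ p.-1.

(* Mori's normal forms (1)-(6): F is the equation in C^4, r the index,
   w the weights of Z_r *)
Definition mori_normal_form (r : nat) (w : wts) (F : ps) : Prop :=
  (exists (a : nat) (f : nat -> nat -> C),
     [/\ (0 < a < r)%N, coprime r a, w = (a, (r - a)%N, r, 1%N)
       & forall m, F m = mon 1 1 0 0 m +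
            (let: (p, q, s, t) := m in
             if [&& p == 0%N, q == 0%N & (r %| t)%N] then f s (t %/ r)%N else 0)])
  \/
  (exists f : nat -> nat -> C,
     [/\ r = 4%N, w = (1, 3, 2, 1)%N
       & forall m, F m = mon 2 0 0 0 m + mon 0 2 0 0 m +
            (let: (p, q, s, t) := m in
             if [&& p == 0%N, q == 0%N & ~~ odd t] then f s t./2 else 0)])
  \/
  (exists f : nat -> nat -> C,
     [/\ r = 2%N, w = (1, 2, 1, 1)%N, ord2_ge f 4
       & forall m, F m = mon 2 0 0 0 m + mon 0 2 0 0 m +
            (let: (p, q, s, t) := m in
             if (p == 0%N) && (q == 0%N) then f s t else 0)])
  \/
  (exists (f : nat -> nat -> C) (g : ps),
     [/\ r = 2%N, w = (1, 1, 2, 1)%N, ord2_ge f 4,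
         (forall m, g m = mon 0 0 3 0 m + mon 1 1 1 0 m)
         \/ (exists n, (4 <= n)%N /\ forall m, g m = mon 1 1 1 0 m + mon 0 0 n 0 m)
         \/ (exists n, (3 <= n)%N /\ forall m, g m = mon 0 2 1 0 m + mon 0 0 n 0 m)
       & forall m, F m = mon 0 0 0 2 m + g m +
            (let: (p, q, s, t) := m in
             if (s == 0%N) && (t == 0%N) then f p q else 0)])
  \/
  (exists (f : nat -> nat -> nat -> C) (g : ps),
     [/\ r = 3%N, w = (1, 2, 2, 3)%N, ord3_ge f 4,
         ((forall m, g m = mon 3 0 0 0 m + mon 0 3 0 0 m + mon 0 0 3 0 m)
          /\ (forall i j l, f i j l = 0))
         \/ (forall m, g m = mon 3 0 0 0 m + mon 0 1 2 0 m)
         \/ (forall m, g m = mon 3 0 0 0 m + mon 0 3 0 0 m)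
       & forall m, F m = mon 0 0 0 2 m + g m +
            (let: (p, q, s, t) := m in
             if t == 0%N then f p q s else 0)])
  \/
  (exists g h : nat -> nat -> C,
     [/\ r = 2%N, w = (2, 1, 1, 1)%N, ord2_ge g 4, ord2_ge h 4
       & forall m, F m = mon 0 0 0 2 m + mon 3 0 0 0 m +
            (let: (p, q, s, t) := m in
             if t == 0%N then
               (if p == 1%N then g q s else 0) + (if p == 0%N then h q s else 0)
             else 0)]).

Definition through_origin (F : ps) : Prop := F (0, 0, 0, 0)%N = 0.

(* (X,x0) is a quotient singularity iff its index-one cover {F = 0} is
   smooth at 0, i.e. F has a nonzero linear term *)
Definition nf_quotient_sing (F : ps) : Prop :=
  ~ ord_ge F 2.

End PS.

(* In every normal form, F has a unique lowest term M0 (xy, x^2 or u^2) for a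
   suitable auxiliary weight cw on monomials, so division by F behaves like
   division by M0: modulo the ideal of X and the invariant series of order
   >= h, every invariant series reduces to a combination of the invariant
   monomials of degree < h that are not divisible by M0, and these monomials
   are independent.  Hence dim O_X / mu_* O_Y(-hE) is their number.  One
   coordinate (u, after renaming the coordinates) has weight 1, so for fixed
   exponents of the other three coordinates about one exponent of u in r gives
   an invariant monomial.  The monomials of degree < h not divisible by x^2,
   or by xy, number h^3/3 + O(h^2); the count is therefore
   h^3/(3r) + O(h^2) = (2/r) h^3/3! + O(h^2). *)

From Stdlib Require Import FunctionalExtensionality.
From HB Require Import structures.
From mathcomp Require Import all_boot all_order all_algebra.
From mathcomp Require Import zify ring lra.
Set Implicit Arguments. Unset Strict Implicit. Unset Printing Implicit Defensive.
Import Order.TTheory GRing.Theory Num.Theory.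
Local Open Scope ring_scope.

(** * Monomials and formal power series *)

Section Monomials.
Local Open Scope nat_scope.

Definition mono_le (m n : mono) : bool :=
  let: (a, b, c, d) := m in let: (a', b', c', d') := n in
  [&& a <= a', b <= b', c <= c' & d <= d'].
Definition mono_add (m n : mono) : mono :=
  let: (a, b, c, d) := m in let: (a', b', c', d') := n in
  (a + a', b + b', c + c', d + d').
Definition mono_sub (m n : mono) : mono :=
  let: (a, b, c, d) := m in let: (a', b', c', d') := n in
  (a - a', b - b', c - c', d - d').

Lemma wdeg_add w m n : wdeg w (mono_add m n) = wdeg w m + wdeg w n.
Proof. by case: w m n => [[[? ?] ?] ?] [[[? ?] ?] ?] [[[? ?] ?] ?] /=; lia. Qed.

Lemma tdeg_add m n : tdeg (mono_add m n) = tdeg m + tdeg n.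
Proof. by case: m n => [[[? ?] ?] ?] [[[? ?] ?] ?] /=; lia. Qed.

Lemma mono_subK m n : mono_le m n -> mono_add (mono_sub n m) m = n.
Proof.
by case: m n => [[[? ?] ?] ?] [[[? ?] ?] ?] /and4P [? ? ? ?] /=; congr (_, _, _, _); lia.
Qed.

Lemma mono_addK m n : mono_sub (mono_add n m) m = n.
Proof. by case: m n => [[[? ?] ?] ?] [[[? ?] ?] ?] /=; congr (_, _, _, _); lia. Qed.

Lemma mono_le_addl m n : mono_le m (mono_add n m).
Proof. by case: m n => [[[? ?] ?] ?] [[[? ?] ?] ?] /=; apply/and4P; split; lia. Qed.

Lemma wdeg_sub w m n : mono_le m n -> wdeg w (mono_sub n m) = wdeg w n - wdeg w m.
Proof. by move=> le_mn; rewrite -{2}(mono_subK le_mn) wdeg_add addnK. Qed.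

Lemma tdeg_sub m n : mono_le m n -> tdeg (mono_sub n m) = tdeg n - tdeg m.
Proof. by move=> le_mn; rewrite -{2}(mono_subK le_mn) tdeg_add addnK. Qed.

Lemma wdeg_le w m n : mono_le m n -> wdeg w m <= wdeg w n.
Proof. by move=> le_mn; rewrite -(mono_subK le_mn) wdeg_add leq_addl. Qed.

Lemma tdeg_le m n : mono_le m n -> tdeg m <= tdeg n.
Proof. by move=> le_mn; rewrite -(mono_subK le_mn) tdeg_add leq_addl. Qed.

End Monomials.

Section PowerSeries.
Variable C : numClosedFieldType.
Implicit Types s t : ps C.

Lemma psmul_eq0 s t m :
  (forall m', mono_le m' m -> s m' * t (mono_sub m m') = 0) -> psmul s t m = 0.
Proof.
case: m => [[[a b] c] d] H /=.
do 4!(apply: big1 => ? _); apply: H.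
by apply/and4P; split; rewrite -ltnS.
Qed.

Lemma psmul_single s t m M0 : mono_le M0 m ->
  (forall m', mono_le m' m -> m' != M0 -> s m' * t (mono_sub m m') = 0) ->
  psmul s t m = s M0 * t (mono_sub m M0).
Proof.
case: m M0 => [[[a b] c] d] [[[a0 b0] c0] d0] /and4P [ha hb hc hd] H /=.
have vanish (i j k l : nat) : (i < a.+1)%N -> (j < b.+1)%N -> (k < c.+1)%N ->
    (l < d.+1)%N -> ~~ [&& i == a0, j == b0, k == c0 & l == d0] ->
    s (i, j, k, l) * t ((a - i)%N, (b - j)%N, (c - k)%N, (d - l)%N) = 0.
  move=> ? ? ? ? ne; apply: H; first by apply/and4P; split; rewrite -ltnS.
  by apply: contra ne; rewrite !xpair_eqE -!andbA.
rewrite (bigD1 (Ordinal (ha : (a0 < a.+1)%N))) //= [X in _ + X]big1 ?addr0; last first.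
  move=> i; rewrite -val_eqE /= => /negbTE ne_i.
  by do 3!(apply: big1 => ? _); apply: vanish; rewrite ?ne_i.
rewrite (bigD1 (Ordinal (hb : (b0 < b.+1)%N))) //= [X in _ + X]big1 ?addr0; last first.
  move=> j; rewrite -val_eqE /= => /negbTE ne_j.
  by do 2!(apply: big1 => ? _); apply: vanish; rewrite ?ne_j ?andbF.
rewrite (bigD1 (Ordinal (hc : (c0 < c.+1)%N))) //= [X in _ + X]big1 ?addr0; last first.
  move=> k; rewrite -val_eqE /= => /negbTE ne_k.
  by apply: big1 => ? _; apply: vanish; rewrite ?ne_k ?andbF.
rewrite (bigD1 (Ordinal (hd : (d0 < d.+1)%N))) //= big1 ?addr0 // => l.
by rewrite -val_eqE /= => /negbTE ne_l; apply: vanish; rewrite ?ne_l ?andbF.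
Qed.

Lemma psmul0r s m : psmul s (fun _ => 0 : C) m = 0.
Proof. by apply: psmul_eq0 => m' _; rewrite mulr0. Qed.

Lemma psmulDr s t1 t2 m :
  psmul s (fun n => t1 n + t2 n) m = psmul s t1 m + psmul s t2 m.
Proof.
case: m => [[[a b] c] d] /=; rewrite -big_split; apply: eq_bigr => i _.
rewrite -big_split; apply: eq_bigr => j _; rewrite -big_split; apply: eq_bigr => k _.
by rewrite -big_split; apply: eq_bigr => l _; rewrite mulrDr.
Qed.

Lemma psmulZr s t x m : psmul s (fun n => x * t n) m = x * psmul s t m.
Proof.
case: m => [[[a b] c] d] /=; rewrite mulr_sumr; apply: eq_bigr => i _.
rewrite mulr_sumr; apply: eq_bigr => j _; rewrite mulr_sumr; apply: eq_bigr => k _.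
by rewrite mulr_sumr; apply: eq_bigr => l _; rewrite mulrCA.
Qed.

End PowerSeries.

(** * Codimension of a subspace *)

Section Codimension.
Variable C : numClosedFieldType.
Implicit Types x y : ps C.

Lemma ps_pred_eq (P : ps C -> Prop) x y : P x -> (forall m, x m = y m) -> P y.
Proof. by move=> Px /functional_extensionality <-. Qed.

Definition ps_subspace (W : ps C -> Prop) : Prop :=
  [/\ W (fun _ => 0), forall x y, W x -> W y -> W (fun m => x m + y m)
    & forall a x, W x -> W (fun m => a * x m)].

Variable W : ps C -> Prop.
Hypothesis W_subspace : ps_subspace W.

Lemma subspace_sum (I : Type) (s : seq I) (c : I -> C) (X : I -> ps C) :
  (forall i, W (X i)) -> W (fun m => \sum_(i <- s) c i * X i m).
Proof.
case: W_subspace => W0 WD WZ WX; elim: s => [|i s IHs].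
  by apply: ps_pred_eq W0 _ => m; rewrite big_nil.
by apply: ps_pred_eq (WD _ _ (WZ (c i) _ (WX i)) IHs) _ => m; rewrite big_cons.
Qed.

Lemma codim_span_le (V : ps C -> Prop) n n' (us : 'I_n -> ps C) (vs : 'I_n' -> ps C) :
  (forall v, V v -> exists a, W (fun m => v m - lincomb a us m)) ->
  (forall j, V (vs j)) ->
  (forall c, W (lincomb c vs) -> forall j, c j = 0) ->
  (n' <= n)%N.
Proof.
move=> span_us V_vs free_vs; rewrite leqNgt; apply/negP => lt_n_n'.
have /fin_all_exists [f Wf] j : exists a, W (fun m => vs j m - lincomb a us m).
  exact: span_us.
pose A := \matrix_(j < n', i < n) f j i.
have : kermx A != 0.
  by rewrite kermx_eq0 -row_leq_rank -ltnNge (leq_ltn_trans (rank_leq_col A)).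
case/rowV0Pn => v /sub_kermxP vA0 /rV0Pn [j0 /eqP]; apply.
apply: free_vs; apply: ps_pred_eq (subspace_sum (index_enum _) (v 0) Wf) _ => m.
have vf0 i : \sum_j v 0 j * f j i = 0.
  move/matrixP: vA0 => /(_ 0 i); rewrite !mxE => vAi0; rewrite -[RHS]vAi0.
  by apply: eq_bigr => j _; rewrite mxE.
have mix : \sum_i (\sum_j v 0 j * f j i) * us i m = \sum_j v 0 j * lincomb (f j) us m.
  under eq_bigr => i _ do rewrite mulr_suml; rewrite exchange_big /=.
  by apply: eq_bigr => j _; rewrite /lincomb mulr_sumr; apply: eq_bigr => i _; rewrite mulrA.
rewrite (eq_bigr (fun j => v 0 j * vs j m - v 0 j * lincomb (f j) us m)) => [|j _]; last first.
  exact: mulrBr.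
by rewrite sumrB -mix [X in _ - X]big1 ?subr0 // => i _; rewrite vf0 mul0r.
Qed.

Lemma codim_eq_uniq (V : ps C -> Prop) n1 n2 :
  codim_eq V W n1 -> codim_eq V W n2 -> n1 = n2.
Proof.
move=> [u1 [V_u1 span_u1 free_u1]] [u2 [V_u2 span_u2 free_u2]]; apply/eqP.
by rewrite eqn_leq (codim_span_le span_u1 V_u2 free_u2) (codim_span_le span_u2 V_u1 free_u1).
Qed.

End Codimension.

Section BlowupIdeal.
Variables (C : numClosedFieldType) (r : nat) (w : wts) (F : ps C) (h : nat).

Lemma Inv_subspace : ps_subspace (Inv (C := C) r w).
Proof.
split=> [m|x y Ix Iy m|a x Ix m]; first by rewrite eqxx.
  by case: (eqVneq (x m) 0) => [x0|/Ix //]; rewrite x0 add0r => /Iy.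
by move=> nz; apply: Ix; apply: contraNneq nz => ->; rewrite mulr0.
Qed.

Lemma blowup_ideal_subspace : ps_subspace (blowup_ideal r w F h).
Proof.
have [I0 ID IZ] := Inv_subspace.
split.
- exists (fun _ => 0), (fun _ => 0); split=> //; last by move=> m; rewrite addr0.
  by split=> //; exists (fun _ => 0) => m; rewrite psmul0r.
- move=> x y [x1 [x2 [[Ix1 [tx Ex1]] Ix2 Ox2 Ex]]] [y1 [y2 [[Iy1 [ty Ey1]] Iy2 Oy2 Ey]]].
  exists (fun m => x1 m + y1 m), (fun m => x2 m + y2 m); split.
  + split; first exact: ID.
    by exists (fun m => tx m + ty m) => m; rewrite psmulDr Ex1 Ey1.
  + exact: ID.
  + by move=> m hm; rewrite Ox2 // Oy2 // addr0.
  + by move=> m; rewrite Ex Ey addrACA.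
- move=> a x [x1 [x2 [[Ix1 [tx Ex1]] Ix2 Ox2 Ex]]].
  exists (fun m => a * x1 m), (fun m => a * x2 m); split.
  + split; first exact: IZ.
    by exists (fun m => a * tx m) => m; rewrite psmulZr Ex1.
  + exact: IZ.
  + by move=> m hm; rewrite Ox2 // mulr0.
  + by move=> m; rewrite Ex mulrDr.
Qed.

Lemma blowup_ideal_Inv s : blowup_ideal r w F h s -> Inv r w s.
Proof.
have [_ ID _] := Inv_subspace.
move=> [s1 [s2 [[Is1 _] Is2 _ Es]]].
by apply: ps_pred_eq (ID _ _ Is1 Is2) _ => m; rewrite Es.
Qed.

End BlowupIdeal.

(** * Standard monomials *)

Definition mono_box (h : nat) : seq mono :=
  [seq (p, d) | p <- [seq (q, c) | q <- [seq (a, b) | a <- iota 0 h, b <- iota 0 h],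
                                   c <- iota 0 h], d <- iota 0 h].

Lemma mono_box_uniq h : uniq (mono_box h).
Proof.
by do 3!(apply: allpairs_uniq; rewrite ?iota_uniq //; last by move=> [? ?] [? ?] _ _ [-> ->]).
Qed.

Lemma mem_mono_box h a b c d :
  ((a, b, c, d) \in mono_box h) = [&& (a < h)%N, (b < h)%N, (c < h)%N & (d < h)%N].
Proof.
apply/idP/and4P => [|[ha hb hc hd]].
- case/allpairsP => [[p d'] /= [+ hd [Ep Ed]]]; subst.
  case/allpairsP => [[q c'] /= [+ hc [Eq Ec]]]; subst.
  case/allpairsP => [[a' b'] /= [ha hb [Ea Eb]]]; subst.
  by move: ha hb hc hd; rewrite !mem_iota.
- by do 3!(apply: allpairs_f; rewrite ?mem_iota //).
Qed.

Lemma mono_box_tdeg h m : (tdeg m < h)%N -> m \in mono_box h.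
Proof. by case: m => [[[a b] c] d] /= hm; rewrite mem_mono_box; apply/and4P; split; lia. Qed.

Definition inv_mono (r : nat) (w : wts) (m : mono) : bool := (wdeg w m %% r == 0)%N.

Definition std_monos (r : nat) (w : wts) (M0 : mono) (h : nat) : seq mono :=
  [seq m <- mono_box h | [&& (tdeg m < h)%N, inv_mono r w m & ~~ mono_le M0 m]].

Definition std_basis (C : numClosedFieldType) r w M0 h
    (i : 'I_(size (std_monos r w M0 h))) : ps C :=
  fun m => (m == nth (0, 0, 0, 0)%N (std_monos r w M0 h) i)%:R.

Section StandardMonomials.
Variables (C : numClosedFieldType) (r : nat) (w cw : wts) (F : ps C) (M0 : mono).
Hypothesis F_M0 : F M0 = 1.
Hypothesis F_semi : forall m, F m != 0 -> wdeg w m = wdeg w M0 %[mod r].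
Hypothesis F_ord : forall m, F m != 0 -> (tdeg M0 <= tdeg m)%N.
Hypothesis F_lead : forall m, F m != 0 -> m != M0 -> (wdeg cw M0 < wdeg cw m)%N.

Lemma F_lead_le m : F m != 0 -> (wdeg cw M0 <= wdeg cw m)%N.
Proof. by move=> Fm; case: (eqVneq m M0) => [-> // | /(F_lead Fm)/ltnW]. Qed.

Lemma Inv_psmulF (t : ps C) :
  (forall N, t N != 0 -> inv_mono r w (mono_add N M0)) -> Inv r w (psmul F t).
Proof.
move=> It m nz; apply/eqP; apply: contraNT nz => not_inv; apply/eqP.
apply: psmul_eq0 => m' le_m'm.
have [-> | Fm'] := eqVneq (F m') 0; first by rewrite mul0r.
have [-> | /It] := eqVneq (t (mono_sub m m')) 0; first by rewrite mulr0.
rewrite /inv_mono wdeg_add wdeg_sub // => /eqP inv_N; case/negP: not_inv; apply/eqP.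
by rewrite -(subnK (wdeg_le w le_m'm)) -modnDmr F_semi // modnDmr inv_N mod0n.
Qed.

Variable h : nat.
Let W := blowup_ideal r w F h.
Let S := std_monos r w M0 h.
Let basis := @std_basis C r w M0 h.

Lemma mem_std_monos m : (m \in S) = [&& (tdeg m < h)%N, inv_mono r w m & ~~ mono_le M0 m].
Proof.
rewrite mem_filter; case: (boolP (tdeg m < h)%N) => // lt_m_h.
by rewrite (mono_box_tdeg lt_m_h) andbT.
Qed.

Lemma lincomb_std_nth c (i : 'I_(size S)) : lincomb c basis (nth (0, 0, 0, 0)%N S i) = c i.
Proof.
rewrite /lincomb (bigD1 i) //= /basis /std_basis eqxx mulr1 big1 ?addr0 // => j ne_ji.
rewrite (nth_uniq _ (ltn_ord i) (ltn_ord j)) ?filter_uniq ?mono_box_uniq //.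
by rewrite eq_sym (inj_eq val_inj) (negbTE ne_ji) mulr0.
Qed.

Lemma lincomb_std_notin c m : m \notin S -> lincomb c basis m = 0.
Proof.
move=> mS; apply: big1 => j _; rewrite /basis /std_basis.
by case: eqP => [E | _]; rewrite ?mulr0 //; move: mS; rewrite E mem_nth.
Qed.

Lemma Inv_std_basis i : Inv r w (basis i).
Proof.
move=> m; rewrite /basis /std_basis -/S.
have [-> _ | _] := eqVneq m (nth (0, 0, 0, 0)%N S i); last by rewrite eqxx.
have : nth (0, 0, 0, 0)%N S i \in S by exact: mem_nth.
by rewrite mem_std_monos => /and3P [_ /eqP -> _]; rewrite mod0n.
Qed.

Lemma Inv_lincomb_std c : Inv r w (lincomb c basis).
Proof.
by apply: ps_pred_eq (subspace_sum (Inv_subspace C r w) (index_enum _) c Inv_std_basis) _.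
Qed.

Lemma std_span_reduced s : Inv r w s ->
  (forall M, (tdeg M < h)%N -> mono_le M0 M -> s M = 0) ->
  W (fun m => s m - lincomb (fun i => s (nth (0, 0, 0, 0)%N S i)) basis m).
Proof.
move=> Is s_red; set c := (fun i : 'I_(size S) => _).
have [I0 ID IZ] := Inv_subspace C r w.
have lc_S m : m \in S -> lincomb c basis m = s m.
  move=> mS; have lt_mS : (index m S < size S)%N by rewrite index_mem.
  have := lincomb_std_nth c (Ordinal lt_mS); rewrite /= nth_index // => ->.
  by rewrite /c /= nth_index.
exists (fun _ => 0), (fun m => s m - lincomb c basis m); split.
- by split=> //; exists (fun _ => 0) => m; rewrite psmul0r.
- apply: ps_pred_eq (ID _ _ Is (IZ (-1) _ (Inv_lincomb_std (c := c)))) _ => m.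
  by rewrite mulN1r.
- move=> m lt_m_h; case: (boolP (m \in S)) => [/lc_S -> | mS]; first by rewrite subrr.
  rewrite lincomb_std_notin // subr0.
  move: mS; rewrite mem_std_monos lt_m_h /= negb_and negbK.
  case/orP => [not_inv | /(s_red m lt_m_h) //].
  by apply/eqP; apply: contraNT not_inv => /Is /eqP; rewrite mod0n.
- by move=> m; rewrite add0r.
Qed.

(* t N is the coefficient of N * M0 in the part of s of cw-weight j; since M0
   is the only term of F of lowest cw-weight, F * t vanishes below weight j and
   agrees with s on the multiples of M0 of weight j. *)
Lemma reduce_lowest_weight j s : Inv r w s ->
  (forall M, (tdeg M < h)%N -> mono_le M0 M -> s M != 0 -> (j <= wdeg cw M)%N) ->
  exists2 t, W (psmul F t) &
    forall M, (tdeg M < h)%N -> mono_le M0 M -> s M - psmul F t M != 0 ->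
      (j < wdeg cw M)%N.
Proof.
move=> Is s_low.
pose t N := if (wdeg cw (mono_add N M0) == j) && (tdeg (mono_add N M0) < h)%N
            then s (mono_add N M0) else 0.
have Ft_low M : (wdeg cw M < j)%N -> psmul F t M = 0.
  move=> lt_M_j; apply: psmul_eq0 => m' le_m'M.
  have [-> | Fm'] := eqVneq (F m') 0; first by rewrite mul0r.
  rewrite /t wdeg_add wdeg_sub //; have := F_lead_le Fm'; have := wdeg_le cw le_m'M.
  by case: ifP => [/andP [/eqP] | _]; rewrite ?mulr0 //; lia.
have Ft_eq M : (tdeg M < h)%N -> wdeg cw M = j -> mono_le M0 M -> psmul F t M = s M.
  move=> lt_M_h wM le_M0M; rewrite (psmul_single le_M0M) => [|m' le_m'M ne_m'M0].
    by rewrite F_M0 mul1r /t mono_subK // wM lt_M_h eqxx.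
  have [-> | Fm'] := eqVneq (F m') 0; first by rewrite mul0r.
  rewrite /t wdeg_add wdeg_sub //; have := F_lead Fm' ne_m'M0; have := wdeg_le cw le_m'M.
  by case: ifP => [/andP [/eqP] | _]; rewrite ?mulr0 //; lia.
exists t.
  exists (psmul F t), (fun _ => 0); split=> //; last by move=> m; rewrite addr0.
    split; last by exists t.
    apply: Inv_psmulF => N; rewrite /t; case: ifP => _; last by rewrite eqxx.
    by move/Is/eqP; rewrite mod0n.
  by have [] := Inv_subspace C r w.
move=> M lt_M_h le_M0M; case: (ltngtP (wdeg cw M) j) => [lt_M_j | // | wM].
  by rewrite Ft_low // subr0 => /(s_low M lt_M_h le_M0M); rewrite leqNgt lt_M_j.
by rewrite Ft_eq // subrr eqxx.
Qed.

Let cw_max := \max_(m <- mono_box h) wdeg cw m.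

Lemma std_reduce k s : Inv r w s ->
  (forall M, (tdeg M < h)%N -> mono_le M0 M -> s M != 0 -> (cw_max < wdeg cw M + k)%N) ->
  exists c, W (fun m => s m - lincomb c basis m).
Proof.
have [_ WD _] := blowup_ideal_subspace r w F h.
elim: k s => [|k IHk] s Is s_low.
  exists (fun i => s (nth (0, 0, 0, 0)%N S i)); apply: std_span_reduced => // M lt_M_h le_M0M.
  apply/eqP; apply: contraTT (leq_bigmax_seq M (mono_box_tdeg lt_M_h) isT) => /s_low.
  by rewrite -ltnNge addn0; apply.
have [t Wt t_low] : exists2 t, W (psmul F t) & forall M, (tdeg M < h)%N -> mono_le M0 M ->
    s M - psmul F t M != 0 -> (cw_max - k < wdeg cw M)%N.
  by apply: reduce_lowest_weight => // M hM le nz; have := s_low M hM le nz; lia.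
have [_ ID IZ] := Inv_subspace C r w.
have Is' : Inv r w (fun m => s m - psmul F t m).
  apply: ps_pred_eq (ID _ _ Is (IZ (-1) _ (blowup_ideal_Inv Wt))) _ => m.
  by rewrite mulN1r.
have [c Wc] : exists c, W (fun m => s m - psmul F t m - lincomb c basis m).
  by apply: IHk => // M hM le nz; have := t_low M hM le nz; lia.
by exists c; apply: ps_pred_eq (WD _ _ Wc Wt) _ => m; rewrite addrAC subrK.
Qed.

(* By induction on the cw-weight of N: the coefficient of N * M0 in F * t is
   t N plus multiples of t N' with N' of smaller cw-weight. *)
Lemma F_cofactor_eq0 t :
  (forall N, (tdeg N + tdeg M0 < h)%N -> psmul F t (mono_add N M0) = 0) ->
  forall N, (tdeg N + tdeg M0 < h)%N -> t N = 0.
Proof.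
move=> Ft0 N; elim: {N}(wdeg cw N).+1 {-2}N (ltnSn (wdeg cw N)) => // q IHq N lt_N_q lt_N_h.
have := Ft0 N lt_N_h; rewrite (psmul_single (mono_le_addl M0 N)) => [|m' le_m' ne_m'M0].
  by rewrite F_M0 mul1r mono_addK.
have [-> | Fm'] := eqVneq (F m') 0; first by rewrite mul0r.
rewrite IHq ?mulr0 // ?wdeg_sub ?tdeg_sub //.
  by have := F_lead Fm' ne_m'M0; have := wdeg_le cw le_m'; rewrite wdeg_add; lia.
by have := F_ord Fm'; have := tdeg_le le_m'; rewrite tdeg_add; lia.
Qed.

Lemma std_free c : W (lincomb c basis) -> forall i, c i = 0.
Proof.
move=> [s1 [s2 [[_ [t Es1]] _ Os2 E]]] i.
have lc_Ft m : (tdeg m < h)%N -> lincomb c basis m = psmul F t m.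
  by move=> lt_m_h; rewrite E Os2 // addr0 Es1.
have t_low : forall N, (tdeg N + tdeg M0 < h)%N -> t N = 0.
  apply: F_cofactor_eq0 => N lt_N_h; rewrite -lc_Ft ?tdeg_add // lincomb_std_notin //.
  by rewrite mem_std_monos mono_le_addl !andbF.
pose mi := nth (0, 0, 0, 0)%N S i; have : mi \in S by exact: mem_nth.
rewrite mem_std_monos => /and3P [lt_mi_h _ _].
rewrite -lincomb_std_nth -/mi lc_Ft //; apply: psmul_eq0 => m' le_m'.
have [-> | Fm'] := eqVneq (F m') 0; first by rewrite mul0r.
by rewrite t_low ?mulr0 // tdeg_sub //; have := F_ord Fm'; have := tdeg_le le_m'; lia.
Qed.

Lemma colength_std : colength r w F h (size S).
Proof.
exists basis; split.
- exact: Inv_std_basis.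
- by move=> v Iv; apply: (@std_reduce cw_max.+1 v Iv) => M *; rewrite addnS ltnS leq_addl.
- exact: std_free.
Qed.

End StandardMonomials.

(** * Counting invariant monomials *)

Section Sums.
Local Open Scope nat_scope.

Lemma sum_ltn h H : \sum_(c < h) (c < H) = minn h H.
Proof.
elim: h => [|h IHh]; first by rewrite big_ord0 min0n.
by rewrite big_ord_recr /= IHh; case: (ltnP h H); lia.
Qed.

Lemma subSn_leq c H : H.+1 - c = H - c + (c <= H).
Proof.
case: leqP => [/subSn -> | lt_Hc]; first by rewrite addn1.
by rewrite addn0 (eqP lt_Hc) (eqP (ltnW lt_Hc)).
Qed.

Lemma sum_subn h H : H <= h -> 2 * \sum_(c < h) (H - c) = H * H.+1.
Proof.
elim: H => [|H IH] le_Hh; first by rewrite big1.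
rewrite (eq_bigr (fun c : 'I_h => H - c + (c < H.+1))) => [|c _]; last exact: subSn_leq.
rewrite big_split /= mulnDr IH ?sum_ltn ?(minn_idPr (ltnW le_Hh)); [nia | exact: ltnW].
Qed.

Lemma sum_subn2 h H : H <= h -> 6 * \sum_(b < h) \sum_(c < h) (H - b - c) = H * H.+1 * H.+2.
Proof.
elim: H => [|H IH] le_Hh; first by rewrite big1 // => b _; rewrite big1.
rewrite (eq_bigr (fun b : 'I_h => \sum_(c < h) (H - b - c) + (H.+1 - b))) => [|b _]; last first.
  rewrite -[X in _ + X](minn_idPr (leq_trans (leq_subr b _) le_Hh)) -sum_ltn -big_split.
  by apply: eq_bigr => c _; rewrite ltn_subRL ltnS -!subnDA subSn_leq.
rewrite big_split /= mulnDr IH; last exact: ltnW.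
by rewrite -[6]/(3 * 2) -(mulnA 3 2) (sum_subn le_Hh); nia.
Qed.

Definition box3_sum (h : nat) (g : nat -> nat -> nat -> nat) : nat :=
  \sum_(a < h) \sum_(b < h) \sum_(c < h) g a b c.

Lemma box3_sum_le h (g1 g2 : nat -> nat -> nat -> nat) :
  (forall a b c, g1 a b c <= g2 a b c) -> box3_sum h g1 <= box3_sum h g2.
Proof. by move=> le_g; do 3!(apply: leq_sum => ? _). Qed.

Lemma box3_sumD h (g1 g2 : nat -> nat -> nat -> nat) :
  box3_sum h (fun a b c => g1 a b c + g2 a b c) = box3_sum h g1 + box3_sum h g2.
Proof.
by rewrite /box3_sum -big_split; apply: eq_bigr => a _; rewrite -big_split;
  apply: eq_bigr => b _; rewrite -big_split.
Qed.

Lemma box3_sumMl h k (g : nat -> nat -> nat -> nat) :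
  box3_sum h (fun a b c => k * g a b c) = k * box3_sum h g.
Proof.
by rewrite /box3_sum big_distrr; apply: eq_bigr => a _; rewrite big_distrr;
  apply: eq_bigr => b _; rewrite big_distrr.
Qed.

Lemma box3_sum_ext h (g1 g2 : nat -> nat -> nat -> nat) :
  (forall a b c, g1 a b c = g2 a b c) -> box3_sum h g1 = box3_sum h g2.
Proof. by move=> eq_g; do 3!(apply: eq_bigr => ? _). Qed.

Lemma height_sum_x2 h :
  6 * box3_sum h (fun a b c => (a < 2) * (h - a - b - c)) = h * h.+1 * (2 * h).+1.
Proof.
pose X a := \sum_(b < h) \sum_(c < h) (h - a - b - c).
have X6 a : 6 * X a = (h - a) * (h - a).+1 * (h - a).+2 by exact/sum_subn2/leq_subr.
rewrite /box3_sum (eq_bigr (fun a : 'I_h => (a < 2) * X a)); last first.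
  by move=> a _; rewrite big_distrr; apply: eq_bigr => b _; rewrite big_distrr.
case: h X X6 => [|[|h]] X X6; first by rewrite big_ord0.
  by rewrite big_ord1 /= mul1n X6.
rewrite 2!big_ord_recl big1 => [|a _] /=; last by rewrite mul0n.
by rewrite !mul1n addn0 mulnDr X6 X6 subn0 subn1 /=; nia.
Qed.

Lemma card_x2 h : box3_sum h (fun a b c => a < 2) <= 2 * (h * h).
Proof.
rewrite /box3_sum (eq_bigr (fun a : 'I_h => (a < 2) * (h * h))) => [|a _]; last first.
  by rewrite !big_const_ord !iter_addn_0 mulnA.
by rewrite -big_distrl /= sum_ltn leq_mul2r geq_minr orbT.
Qed.

Lemma box3_sum_axes h (g : nat -> nat -> nat -> nat) :
  box3_sum h (fun a b c => ((a == 0) || (b == 0)) * g a b c) + \sum_(c < h) g 0 0 c =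
  \sum_(b < h) \sum_(c < h) g 0 b c + \sum_(a < h) \sum_(c < h) g a 0 c.
Proof.
case: h => [|h]; first by rewrite /box3_sum !big_ord0.
pose Y a b := \sum_(c < h.+1) g a b c.
pose Z a := \sum_(b < h.+1) ((a == 0) || (b == 0 :> nat)) * Y a b.
have Z0 : Z 0 = \sum_(b < h.+1) Y 0 b by apply: eq_bigr => b _; rewrite mul1n.
have ZS a : Z a.+1 = Y a.+1 0.
  by rewrite /Z big_ord_recl /= mul1n big1 ?addn0 // => b _; rewrite mul0n.
rewrite /box3_sum (eq_bigr (fun a : 'I_h.+1 => Z a)); last first.
  by move=> a _; apply: eq_bigr => b _; rewrite big_distrr.
rewrite -[\sum_(c < h.+1) g 0 0 c]/(Y 0 0).
rewrite -[RHS]/(\sum_(b < h.+1) Y 0 b + \sum_(a < h.+1) Y a 0).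
rewrite (big_ord_recl h (fun i : 'I_h.+1 => Z i)) (big_ord_recl h (fun i : 'I_h.+1 => Y i 0)) /=.
have -> : \sum_(i < h) Z (bump 0 i) = \sum_(i < h) Y (bump 0 i) 0.
  by apply: eq_bigr => i _; exact: ZS.
by rewrite Z0 addnAC addnA.
Qed.

Lemma height_sum_xy h :
  6 * box3_sum h (fun a b c => ((a == 0) || (b == 0)) * (h - a - b - c)) = h * h.+1 * (2 * h).+1.
Proof.
have := box3_sum_axes h (fun a b c => h - a - b - c).
have T0 : 6 * \sum_(b < h) \sum_(c < h) (h - 0 - b - c) = h * h.+1 * h.+2.
  by rewrite subn0 sum_subn2.
have T1 : 6 * \sum_(a < h) \sum_(c < h) (h - a - 0 - c) = h * h.+1 * h.+2.
  rewrite -(sum_subn2 (leqnn h)); congr (6 * _).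
  by apply: eq_bigr => a _; apply: eq_bigr => c _; rewrite subn0.
have L : 2 * \sum_(c < h) (h - 0 - 0 - c) = h * h.+1 by rewrite !subn0 sum_subn.
nia.
Qed.

Lemma card_xy h : box3_sum h (fun a b c => (a == 0) || (b == 0)) <= 2 * (h * h).
Proof.
have := box3_sum_axes h (fun _ _ _ => 1).
rewrite (@box3_sum_ext h _ (fun a b c => (a == 0) || (b == 0))) => [|a b c]; last exact: muln1.
by rewrite !big_const_ord !iter_addn_0; lia.
Qed.

End Sums.

Section ResidueCount.
Local Open Scope nat_scope.
Variable r : nat.
Hypothesis r_gt0 : 0 < r.

Definition residue_count (f L : nat) : nat := \sum_(k < L) ((f + k) %% r == 0 : nat).

Lemma residue_countE f L :
  residue_count f L = (f + r.-1 + L) %/ r - (f + r.-1) %/ r.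
Proof.
elim: L => [|L IHL]; first by rewrite /residue_count big_ord0 addn0 subnn.
rewrite /residue_count big_ord_recr /= -/(residue_count f L) IHL addnS divnS //.
have : (f + r.-1) %/ r <= (f + r.-1 + L) %/ r by apply: leq_div2r; rewrite leq_addr.
have -> : (r %| (f + r.-1 + L).+1) = ((f + L) %% r == 0).
  have -> : (f + r.-1 + L).+1 = f + L + r by lia.
  by rewrite dvdn_addl.
lia.
Qed.

Lemma residue_count_bounds f L :
  r * residue_count f L <= L + r /\ L <= r * residue_count f L + r.
Proof.
rewrite residue_countE; set X := f + r.-1.
have := leq_divM (X + L) r; have := ltn_ceil (X + L) r_gt0.
have := leq_divM X r; have := ltn_ceil X r_gt0.
have : X %/ r <= (X + L) %/ r by apply: leq_div2r; rewrite leq_addr.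
move: (X %/ r) ((X + L) %/ r) => q1 q2; rewrite !mulSn; nia.
Qed.

Lemma residue_count_widen h f L :
  L <= h -> residue_count f L = \sum_(d < h) ((d < L) && ((f + d) %% r == 0)).
Proof.
move=> le_Lh; rewrite /residue_count (big_ord_widen h (fun d => (f + d) %% r == 0 : nat)) //.
by rewrite big_mkcond; apply: eq_bigr => d _; case: (d < L).
Qed.

(* N = (2/r) h^3/3! + O(h^2), with the denominators cleared. *)
Definition count_approx (h N : nat) : Prop :=
  6 * r * N <= 2 * (h * h * h) + 60 * r * (h * h) /\
  2 * (h * h * h) <= 6 * r * N + 60 * r * (h * h).

Lemma count_approx_of_heights h (Q : nat -> nat -> nat -> bool)
    (psi : nat -> nat -> nat -> nat) :
  6 * box3_sum h (fun a b c => Q a b c * (h - a - b - c)) = h * h.+1 * (2 * h).+1 ->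
  box3_sum h (fun a b c => Q a b c) <= 2 * (h * h) ->
  count_approx h (box3_sum h (fun a b c => Q a b c * residue_count (psi a b c) (h - a - b - c))).
Proof.
set N := box3_sum h (fun a b c => _ * residue_count _ _).
set S := box3_sum h (fun a b c => _ * (_ - _)); set K := box3_sum h _ => S6 K2.
have up : r * N <= S + r * K.
  rewrite -!box3_sumMl -box3_sumD; apply: box3_sum_le => a b c.
  have [le_rc _] := residue_count_bounds (psi a b c) (h - a - b - c).
  by case: (Q a b c); rewrite /= ?mul1n ?muln1 ?mul0n ?muln0.
have lo : S <= r * N + r * K.
  rewrite -!box3_sumMl -box3_sumD; apply: box3_sum_le => a b c.
  have [_ le_rc] := residue_count_bounds (psi a b c) (h - a - b - c).
  by case: (Q a b c); rewrite /= ?mul1n ?muln1 ?mul0n ?muln0.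
have rK : r * K <= r * (2 * (h * h)) by rewrite leq_mul2l K2 orbT.
have hh_r : h * h <= r * (h * h) by rewrite leq_pmull.
have h_hh : h <= h * h by nia.
rewrite /count_approx; lia.
Qed.

End ResidueCount.

Section StdCount.
Local Open Scope nat_scope.

Lemma count_mono_box (P : pred mono) h :
  count P (mono_box h) =
  \sum_(a < h) \sum_(b < h) \sum_(c < h) \sum_(d < h) P (a : nat, b : nat, c : nat, d : nat).
Proof.
have iotaE (G : nat -> nat) : \sum_(a <- iota 0 h) G a = \sum_(a < h) G a.
  by rewrite -(big_mkord xpredT) /index_iota subn0.
rewrite -sum1_count big_mkcond /= /mono_box !big_allpairs !iotaE.
apply: eq_bigr => a _; rewrite iotaE; apply: eq_bigr => b _; rewrite iotaE.
by apply: eq_bigr => c _; rewrite iotaE; apply: eq_bigr => d _; case: P.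
Qed.

Lemma size_std_monos r w1 w2 w3 p q s h :
  size (std_monos r (w1, w2, w3, 1) (p, q, s, 0) h) =
  box3_sum h (fun a b c => ~~ mono_le (p, q, s, 0) (a, b, c, 0) *
                           residue_count r (w1 * a + w2 * b + w3 * c) (h - a - b - c)).
Proof.
rewrite size_filter count_mono_box; apply: eq_bigr => a _; apply: eq_bigr => b _.
apply: eq_bigr => c _; rewrite (@residue_count_widen r h) ?big_distrr; last by lia.
apply: eq_bigr => d _; rewrite /inv_mono /= mul1n !leq0n !andbT.
have -> : (d < h - a - b - c) = (a + b + c + d < h) by apply/idP/idP; lia.
by case: (a + b + c + d < h); case: (_ %% r == 0); case: (~~ _).
Qed.

Lemma count_approx_std_x2 r w1 w2 w3 h : 0 < r ->
  count_approx r h (size (std_monos r (w1, w2, w3, 1) (2, 0, 0, 0) h)).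
Proof.
move=> r_gt0; rewrite size_std_monos.
rewrite (@box3_sum_ext h _ (fun a b c => (a < 2) *
    residue_count r (w1 * a + w2 * b + w3 * c) (h - a - b - c))) => [|a b c]; last first.
  by rewrite /= !leq0n !andbT -leqNgt.
apply: (@count_approx_of_heights r r_gt0 h (fun a b c => a < 2)).
  exact: height_sum_x2.
exact: card_x2.
Qed.

Lemma count_approx_std_xy r w1 w2 w3 h : 0 < r ->
  count_approx r h (size (std_monos r (w1, w2, w3, 1) (1, 1, 0, 0) h)).
Proof.
move=> r_gt0; rewrite size_std_monos.
rewrite (@box3_sum_ext h _ (fun a b c => ((a == 0) || (b == 0)) *
    residue_count r (w1 * a + w2 * b + w3 * c) (h - a - b - c))) => [|a b c]; last first.
  by rewrite /= !leq0n !andbT negb_and -!eqn0Ngt.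
apply: (@count_approx_of_heights r r_gt0 h (fun a b c => (a == 0) || (b == 0))).
  exact: height_sum_xy.
exact: card_xy.
Qed.

End StdCount.

Definition swap14 (m : mono) : mono := let: (a, b, c, d) := m in (d, b, c, a).
Definition swap24 (m : mono) : mono := let: (a, b, c, d) := m in (a, d, c, b).

Definition mono_transposition (s : mono -> mono) : Prop :=
  [/\ involutive s, forall m, tdeg (s m) = tdeg m,
      forall w m, wdeg w (s m) = wdeg (s w) m,
      forall M m, mono_le M (s m) = mono_le (s M) m
    & forall h m, (s m \in mono_box h) = (m \in mono_box h)].

Lemma swap14_transposition : mono_transposition swap14.
Proof.
split.
- by case=> [[[a b] c] d].
- by case=> [[[a b] c] d] /=; lia.
- by case=> [[[w1 w2] w3] w4] [[[a b] c] d] /=; lia.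
- case=> [[[p q] s] t] [[[a b] c] d] /=.
  by case: (p <= d)%N; case: (t <= a)%N; rewrite ?andbF.
- move=> h [[[a b] c] d]; rewrite !mem_mono_box.
  by case: (a < h)%N; case: (d < h)%N; rewrite ?andbF.
Qed.

Lemma swap24_transposition : mono_transposition swap24.
Proof.
split.
- by case=> [[[a b] c] d].
- by case=> [[[a b] c] d] /=; lia.
- by case=> [[[w1 w2] w3] w4] [[[a b] c] d] /=; lia.
- case=> [[[p q] s] t] [[[a b] c] d] /=.
  by case: (q <= d)%N; case: (t <= b)%N; rewrite ?andbF.
- move=> h [[[a b] c] d]; rewrite !mem_mono_box.
  by case: (b < h)%N; case: (d < h)%N; rewrite ?andbF.
Qed.

Lemma size_std_monos_transposition s r w M0 h : mono_transposition s ->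
  size (std_monos r w M0 h) = size (std_monos r (s w) (s M0) h).
Proof.
case=> s_inv s_tdeg s_wdeg s_le s_box; rewrite !size_filter.
have perm_box : perm_eq (mono_box h) (map s (mono_box h)).
  apply: uniq_perm; rewrite ?map_inj_uniq ?mono_box_uniq //; first exact: inv_inj.
  by move=> m; rewrite -{2}(s_inv m) mem_map ?s_box //; exact: inv_inj.
rewrite (permP perm_box) count_map; apply: eq_count => m /=.
by rewrite /inv_mono s_tdeg s_wdeg s_le.
Qed.

Lemma count_approx_std_u2_x r w2 w3 w4 h : (0 < r)%N ->
  count_approx r h (size (std_monos r (1, w2, w3, w4) (0, 0, 0, 2) h)).
Proof.
move=> r_gt0; rewrite (size_std_monos_transposition _ _ _ _ swap14_transposition).
exact: count_approx_std_x2.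
Qed.

Lemma count_approx_std_u2_y r w1 w3 w4 h : (0 < r)%N ->
  count_approx r h (size (std_monos r (w1, 1, w3, w4) (0, 0, 0, 2) h)).
Proof.
move=> r_gt0; rewrite (size_std_monos_transposition _ _ _ _ swap14_transposition).
rewrite (size_std_monos_transposition _ _ _ _ swap24_transposition).
exact: count_approx_std_x2.
Qed.

(** * The weighted multiplicity *)

Lemma count_approx_rat r h N : (0 < r)%N -> count_approx r h N ->
  `| N%:R - 2%:R / r%:R * h%:R ^+ 3 / (3`!)%:R | <= (10%:R : rat) * h%:R ^+ 3.-1.
Proof.
move=> r_gt0 [up lo]; move: up lo; rewrite -!(ler_nat rat) !natrD !natrM => up lo.
have r_pos : (0 : rat) < r%:R by rewrite ltr0n.
have -> : N%:R - 2%:R / r%:R * h%:R ^+ 3 / (3`!)%:R =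
    (6%:R * r%:R * N%:R - 2%:R * h%:R ^+ 3) / (6%:R * r%:R) :> rat.
  by rewrite (_ : 3`! = 6)%N //; field; rewrite gt_eqF.
have den_pos : (0 : rat) < 6%:R * r%:R by rewrite mulr_gt0 ?ltr0n.
rewrite normrM normfV (gtr0_norm den_pos) ler_pdivrMr //.
rewrite ler_norml; move: up lo; rewrite !expr2 !exprS expr0 !mulr1.
by move: (r%:R : rat) (h%:R : rat) (N%:R : rat) r_pos => R H M R_pos up lo; apply/andP; split; nra.
Qed.

Definition lowest_term (C : numClosedFieldType) (cw : wts) (F : ps C) (M0 : mono) : Prop :=
  F M0 = 1 /\ forall m, F m != 0 -> m != M0 -> (wdeg cw M0 < wdeg cw m)%N.

Lemma wmult_of_std_count (C : numClosedFieldType) r w cw (F : ps C) M0 :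
  (0 < r)%N -> semi_invariant r w F -> lowest_term cw F M0 ->
  (forall m, F m != 0 -> (tdeg M0 <= tdeg m)%N) ->
  (forall h, count_approx r h (size (std_monos r w M0 h))) ->
  wmult_is r w F 3 (2%:R / r%:R).
Proof.
move=> r_gt0 [e Fe] [F_M0 F_lead] F_ord approx.
have F_semi m : F m != 0 -> wdeg w m = wdeg w M0 %[mod r].
  by move=> Fm; rewrite Fe // Fe // F_M0 oner_neq0.
have colength_size h := colength_std F_M0 F_semi F_ord F_lead h.
split=> [h|]; first by exists (size (std_monos r w M0 h)).
exists 10%:R => h n _ colength_n.
rewrite (codim_eq_uniq (blowup_ideal_subspace r w F h) colength_n (colength_size h)).
exact: count_approx_rat.
Qed.

Lemma not_quotient_ord2 (C : numClosedFieldType) (F : ps C) :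
  ~ nf_quotient_sing F -> forall m, F m != 0 -> (2 <= tdeg m)%N.
Proof.
move=> not_quot m Fm; rewrite leqNgt; apply/negP => lt_m2.
by apply: not_quot => ordF; move: Fm; rewrite ordF ?eqxx.
Qed.

Section LowestTerm.
Variables (C : numClosedFieldType) (F : ps C).
Hypothesis F_ord : forall m, F m != 0 -> (2 <= tdeg m)%N.

Lemma lowest_term_x2 : F (2, 0, 0, 0)%N = 1 -> lowest_term (3, 4, 4, 4)%N F (2, 0, 0, 0)%N.
Proof.
split=> // -[[[a b] c] d] /F_ord /= deg_m; apply: contraNT; rewrite -leqNgt => le_m.
by apply/eqP; congr (_, _, _, _); lia.
Qed.

Lemma lowest_term_u2 : F (0, 0, 0, 2)%N = 1 -> lowest_term (4, 4, 4, 3)%N F (0, 0, 0, 2)%N.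
Proof.
split=> // -[[[a b] c] d] /F_ord /= deg_m; apply: contraNT; rewrite -leqNgt => le_m.
by apply/eqP; congr (_, _, _, _); lia.
Qed.

Lemma mori_normal_form_std r w : (0 < r)%N -> mori_normal_form r w F ->
  exists cw M0, [/\ lowest_term cw F M0, tdeg M0 = 2%N
    & forall h, count_approx r h (size (std_monos r w M0 h))].
Proof.
move=> r_gt0.
case=> [[a [f [_ _ -> FE]]] | [[f [_ -> FE]] | [[f [_ -> _ FE]] |
  [[f [g [_ -> _ gE FE]]] | [[f [g [_ -> _ gE FE]]] | [g [k [_ -> _ _ FE]]]]]]]].
- exists (3, 3, 4, 4)%N, (1, 1, 0, 0)%N; split=> // [|h]; last exact: count_approx_std_xy.
  split=> [|[[[p q] s] t] Fm ne_m]; first by rewrite FE /mon /= addr0.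
  have := F_ord Fm; move: Fm; rewrite FE /mon (negbTE ne_m) add0r.
  by case: ifP => [/and3P [/eqP -> /eqP -> _] _ /= | _]; rewrite ?eqxx //; lia.
- exists (3, 4, 4, 4)%N, (2, 0, 0, 0)%N; split=> // [|h]; last exact: count_approx_std_x2.
  by apply: lowest_term_x2; rewrite FE /mon /= !addr0.
- exists (3, 4, 4, 4)%N, (2, 0, 0, 0)%N; split=> // [|h]; last exact: count_approx_std_x2.
  by apply: lowest_term_x2; rewrite FE /mon /= !addr0.
- exists (4, 4, 4, 3)%N, (0, 0, 0, 2)%N; split=> // [|h]; last exact: count_approx_std_u2_x.
  apply: lowest_term_u2; rewrite FE /mon /=.
  by case: gE => [gE | [[n [_ gE]] | [n [_ gE]]]]; rewrite gE /mon ?xpair_eqE /= ?andbF ?addr0.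
- exists (4, 4, 4, 3)%N, (0, 0, 0, 2)%N; split=> // [|h]; last exact: count_approx_std_u2_x.
  apply: lowest_term_u2; rewrite FE /mon /=.
  by case: gE => [[gE _] | [gE | gE]]; rewrite gE /mon ?xpair_eqE /= ?andbF ?addr0.
- exists (4, 4, 4, 3)%N, (0, 0, 0, 2)%N; split=> // [|h]; last exact: count_approx_std_u2_y.
  by apply: lowest_term_u2; rewrite FE /mon /= !addr0.
Qed.

End LowestTerm.

Theorem theorem2p7 (C : numClosedFieldType) (r : nat) (w : wts) (F : ps C) :
  mori_normal_form r w F ->
  semi_invariant r w F ->
  through_origin F ->
  ~ nf_quotient_sing F ->
  (1 < r)%N ->
  wmult_is r w F 3 (2%:R / r%:R).
Proof.
move=> nf semi _ not_quot r_gt1.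
have r_gt0 : (0 < r)%N by exact: ltnW.
have F_ord := not_quotient_ord2 not_quot.
have [cw [M0 [lowest deg_M0 approx]]] := mori_normal_form_std F_ord r_gt0 nf.
apply: (wmult_of_std_count r_gt0 semi lowest _ approx).
by move=> m; rewrite deg_M0; exact: F_ord.
Qed.
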